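(* Let $(X,\mathcal{B},\mu,T)$ be a probability measure-preserving system, $f\in L^2\cap L^\infty(X,\mu)$, and $\{n_i\}_{i\ge1}\subset\mathbb{N}$ a strictly increasing sequence. Suppose there exist $\alpha>0$ and $C>0$ such that $f_0=f-\int_X f\,d\mu$ satisfies $|\langle f_0\circ T^n,f_0\rangle|\le Cn^{-\alpha}$ for all $n\ge1$. Then for $\mu$-almost every $x\in X$, $$\frac1N\sum_{i=1}^N f(T^{n_i}x)\longrightarrow\int_X f\,d\mu\quad(N\to\infty).$$
   Context: $\langle g,h\rangle=\int_X g\overline{h}\,d\mu$. *)

From HB Require Import structures.
From mathcomp Require Import all_boot all_order all_algebra.
From mathcomp Require Import all_classical all_reals all_analysis.
Set Implicit Arguments. Unset Strict Implicit. Unset Printing Implicit Defensive.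
Import Order.TTheory GRing.Theory Num.Theory numFieldNormedType.Exports.
Local Open Scope classical_set_scope.
Local Open Scope ring_scope.

(* A complex-valued function f = fr + i fi is encoded by its real and
   imaginary parts fr, fi : X -> R. *)

Definition measure_preserving d (X : measurableType d) (R : realType)
  (P : probability X R) (T : X -> X) : Prop :=
  measurable_fun setT T /\
  forall A : set X, measurable A -> P (T @^-1` A) = P A.

Definition ess_bounded d (X : measurableType d) (R : realType)
  (P : probability X R) (g : X -> R) : Prop :=
  exists M : R, {ae P, forall x, `|g x| <= M}.

Definition square_integrable d (X : measurableType d) (R : realType)
  (P : probability X R) (g : X -> R) : Prop :=
  P.-integrable setT (fun x => ((g x) ^+ 2)%:E).

Definition mean d (X : measurableType d) (R : realType)
  (P : probability X R) (g : X -> R) : R := Rintegral P setT g.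

(* Real and imaginary part of <u, v> = \int_X u * conj v dmu
   for u = a + i b, v = c + i e : u conj v = (a c + b e) + i (b c - a e). *)
Definition inner_re d (X : measurableType d) (R : realType)
  (P : probability X R) (a b c e : X -> R) : R :=
  Rintegral P setT (fun x => a x * c x + b x * e x).
Definition inner_im d (X : measurableType d) (R : realType)
  (P : probability X R) (a b c e : X -> R) : R :=
  Rintegral P setT (fun x => b x * c x - a x * e x).

Definition cmod (R : realType) (re im : R) : R := Num.sqrt (re ^+ 2 + im ^+ 2).

(* N-th ergodic average along the sequence n_1, n_2, ... (encoded as ns 0, ns 1, ...) *)
Definition avg_along d (X : measurableType d) (R : realType)
  (T : X -> X) (ns : nat -> nat) (g : X -> R) (x : X) (N : nat) : R :=
  N%:R^-1 * \sum_(i < N) g (iter (ns i) T x).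

From HB Require Import structures.
From mathcomp Require Import all_boot all_order all_algebra.
From mathcomp Require Import all_classical all_reals all_analysis.
From mathcomp Require Import measurable_realfun.
From mathcomp Require Import ring lra zify.
Import Order.TTheory GRing.Theory Num.Theory numFieldNormedType.Exports.
Local Open Scope classical_set_scope.
Local Open Scope ring_scope.

(* Let f0 = a + i b be the centred function and c(p, q) the real part of
   <f0 o T^p, f0 o T^q>.  Measure preservation gives c(p, m + p) = c(0, m), and
   |n_i - n_j| >= |i - j|, so for every M >= 1 the orbit sum
   S_N x = \sum_(i < N) f0 (T^(n_i) x) satisfies
     E |S_N|^2 = \sum_(i, j < N) c(n_i, n_j) <= N c(0,0) + C N (2M + 1) + C N^2 M^-alpha.
   Along N_k = (k+1)^(q+2) with M = (k+1)^q and q alpha >= 2 this is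
   O(N_k^2 / (k+1)^2), so \sum_k |S_(N_k) / N_k|^2 is integrable and S_(N_k) / N_k -> 0
   almost everywhere.  As N_(k+1) / N_k -> 1 and f is bounded, the averages between
   two consecutive N_k cannot drift away, which gives convergence along all N. *)

Set Implicit Arguments. Unset Strict Implicit.

Lemma normM_le_sqrD {R : realDomainType} (x y : R) : `|x * y| <= x ^+ 2 + y ^+ 2.
Proof.
rewrite normrM -(real_normK (num_real x)) -(real_normK (num_real y)).
have := normr_ge0 x; have := normr_ge0 y; nra.
Qed.

Section Iterates.
Context {d : measure_display} {X : measurableType d} {R : realType}.
Context {P : probability X R} {T : X -> X}.
Hypothesis mpT : measure_preserving P T.

Lemma measurable_iter k : measurable_fun setT (iter k T).
Proof.
elim: k => [|k IH] /=; first exact: measurable_id.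
exact: measurableT_comp mpT.1 IH.
Qed.

Lemma measure_preimage_iter k A : measurable A -> P (iter k T @^-1` A) = P A.
Proof.
elim: k A => [|k IH] A mA //=.
rewrite (_ : (fun x => T (iter k T x)) @^-1` A = iter k T @^-1` (T @^-1` A)) //.
rewrite IH; first exact: mpT.2.
by rewrite -[_ @^-1` _]setTI; apply: mpT.1.
Qed.

Lemma ae_forall_iter (Q : X -> Prop) :
  {ae P, forall x, Q x} -> {ae P, forall x, forall n, Q (iter n T x)}.
Proof.
case=> N [mN PN QN]; apply: ae_foralln => n.
exists (iter n T @^-1` N); split.
- by rewrite -[_ @^-1` _]setTI; apply: measurable_iter.
- by rewrite -PN; exact: measure_preimage_iter.
- by move=> x /= ?; apply: QN.
Qed.

Local Open Scope ereal_scope.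

Lemma integral_pushforward_iter k (f : X -> \bar R) : measurable_fun setT f ->
  \int[pushforward P (iter k T)]_x f x = \int[P]_x f x.
Proof.
move=> mf; apply: eq_measure_integral; first by move=> *; exact: measurable_iter.
by move=> mT A mA _; rewrite /= /pushforward measure_preimage_iter.
Qed.

Lemma integrable_iter k (g : X -> R) : measurable_fun setT g ->
  P.-integrable setT (EFin \o g) -> P.-integrable setT (EFin \o (g \o iter k T)).
Proof.
move=> mg /integrableP[_ ig]; apply/integrableP; split.
  by apply/measurable_EFinP; apply: measurableT_comp => //; exact: measurable_iter.
have mEg : measurable_fun setT (fun x => `|(g x)%:E|).
  by apply/measurableT_comp => //; exact/measurable_EFinP.
have := ge0_integral_pushforward (measurable_iter k) P measurableT mEg.
by rewrite preimage_setT integral_pushforward_iter // => <-.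
Qed.

Lemma integral_iter k (g : X -> R) : measurable_fun setT g ->
  P.-integrable setT (EFin \o g) ->
  \int[P]_x (g (iter k T x))%:E = \int[P]_x (g x)%:E.
Proof.
move=> mg ig; have mEg : measurable_fun setT (EFin \o g) by exact/measurable_EFinP.
rewrite -[RHS](integral_pushforward_iter k mEg).
rewrite (integral_pushforward (measurable_iter k) mEg _ measurableT) ?preimage_setT //.
exact: integrable_iter.
Qed.

Local Close Scope ereal_scope.

Lemma integrable_mul_iter (a : X -> R) p q : measurable_fun setT a ->
  P.-integrable setT (fun x => (a x ^+ 2)%:E) ->
  P.-integrable setT (fun x => (a (iter p T x) * a (iter q T x))%:E).
Proof.
move=> ma ia.
have ia2 k : P.-integrable setT (fun x => (a (iter k T x) ^+ 2)%:E).
  by apply: (integrable_iter k (g := fun x => a x ^+ 2) _ ia); exact: measurable_funX.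
apply: (le_integrable measurableT _ _ (integrableD measurableT (ia2 p) (ia2 q))).
  by apply/measurable_EFinP; apply: measurable_funM; apply: measurableT_comp ma _;
    exact: measurable_iter.
move=> x _; rewrite [leRHS]gee0_abs ?adde_ge0 ?lee_fin ?sqr_ge0 //.
by rewrite /= ?lee_fin normM_le_sqrD.
Qed.

End Iterates.

Lemma integrable_sqrB {d : measure_display} {X : measurableType d} {R : realType}
  {P : probability X R} (g : X -> R) (c : R) : measurable_fun setT g ->
  P.-integrable setT (fun x => (g x ^+ 2)%:E) ->
  P.-integrable setT (fun x => ((g x - c) ^+ 2)%:E).
Proof.
move=> mg ig.
have i2 := integrableD measurableT (integrableZl measurableT 2 ig)
  (finite_measure_integrable_cst P (2 * c ^+ 2) measurableT).
apply: (le_integrable measurableT _ _ i2).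
  by apply/measurable_EFinP; apply: measurable_funX; apply: measurable_funB.
move=> x _ /=; rewrite lee_fin !ger0_norm ?sqr_ge0 //.
- by have := sqr_ge0 (g x + c); nra.
- by have := sqr_ge0 (g x); have := sqr_ge0 c; nra.
Qed.

Definition orbit_sum_norm2 {X : Type} {R : realType} (T : X -> X) (ns : nat -> nat)
  (a b : X -> R) (N : nat) (x : X) : R :=
  (\sum_(i < N) a (iter (ns i) T x)) ^+ 2 + (\sum_(i < N) b (iter (ns i) T x)) ^+ 2.

Section Correlation.
Context {d : measure_display} {X : measurableType d} {R : realType}.
Context (P : probability X R) (T : X -> X).
Variables a b : X -> R.

Definition corr (p q : nat) := Rintegral P setT
  (fun x => a (iter p T x) * a (iter q T x) + b (iter p T x) * b (iter q T x)).

Lemma corrC p q : corr p q = corr q p.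
Proof. by apply: eq_Rintegral => x _; rewrite (mulrC (a _)) (mulrC (b _)). Qed.

Lemma corr00_ge0 : 0 <= corr 0 0.
Proof. by apply: Rintegral_ge0 => x _; rewrite /= -!expr2 addr_ge0 ?sqr_ge0. Qed.

Hypothesis mpT : measure_preserving P T.
Hypotheses (ma : measurable_fun setT a) (mb : measurable_fun setT b).
Hypothesis ia : P.-integrable setT (fun x => (a x ^+ 2)%:E).
Hypothesis ib : P.-integrable setT (fun x => (b x ^+ 2)%:E).

Lemma integrable_corr p q : P.-integrable setT
  (fun x => (a (iter p T x) * a (iter q T x) + b (iter p T x) * b (iter q T x))%:E).
Proof.
apply: (eq_integrable measurableT _ _ _ (integrableD measurableT
  (integrable_mul_iter mpT p q ma ia) (integrable_mul_iter mpT p q mb ib))).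
by move=> x _; rewrite /= EFinD.
Qed.

Lemma corrE p q : (corr p q)%:E = (\int[P]_x
  (a (iter p T x) * a (iter q T x) + b (iter p T x) * b (iter q T x))%:E)%E.
Proof. by rewrite fineK // integrable_fin_num // integrable_corr. Qed.

Lemma corr_shift p m : corr p (m + p) = corr 0 m.
Proof.
congr fine; rewrite -(integral_iter mpT p (g := fun x =>
  a x * a (iter m T x) + b x * b (iter m T x))).
- by apply: eq_integral => x _; rewrite /= -!iterD.
- by apply: measurable_funD; apply: measurable_funM => //;
    apply: measurableT_comp (measurable_iter mpT m).
- exact: (integrable_corr 0 m).
Qed.

Lemma integral_orbit_sum_norm2 (ns : nat -> nat) N :
  (\int[P]_x (orbit_sum_norm2 T ns a b N x)%:E =
   (\sum_(i < N) \sum_(j < N) corr (ns i) (ns j))%:E)%E.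
Proof.
transitivity (\int[P]_x (\sum_(i < N) \sum_(j < N)
  (a (iter (ns i) T x) * a (iter (ns j) T x) +
   b (iter (ns i) T x) * b (iter (ns j) T x))%:E))%E.
  apply: eq_integral => x _; under [RHS]eq_bigr do rewrite sumEFin.
  rewrite sumEFin /orbit_sum_norm2 !expr2 !big_distrl /= -big_split /=; congr _%:E.
  by apply: eq_bigr => i _; rewrite !big_distrr -big_split.
rewrite (@integral_sum _ _ _ P setT measurableT) //; last first.
  by move=> i; apply: integrable_sum => [|j _]; [exact: measurableT|exact: integrable_corr].
rewrite -sumEFin; apply: eq_bigr => i _.
rewrite (@integral_sum _ _ _ P setT measurableT) //; last by move=> j; exact: integrable_corr.
by rewrite -sumEFin; apply: eq_bigr => j _; rewrite corrE.
Qed.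

End Correlation.

Lemma count_window (N lo hi : nat) :
  (\sum_(j < N) (lo <= j <= hi) = minn N hi.+1 - lo)%N.
Proof.
elim: N => [|N IH]; first by rewrite big_ord0.
by rewrite big_ord_recr /= IH; case: (leqP lo N); case: (leqP N hi) => /=; lia.
Qed.

Lemma count_near_le (N M i : nat) :
  (\sum_(j < N) ((i - j) + (j - i) <= M) <= M.*2.+1)%N.
Proof.
apply: (@leq_trans (\sum_(j < N) (i - M <= j <= i + M))%N).
  apply: leq_sum => j _; case: (leqP (i - j + (j - i)) M) => //= h.
  by have -> : (i - M <= j <= i + M)%N by apply/andP; split; lia.
by rewrite count_window; lia.
Qed.

Lemma homo_ltn_gap (ns : nat -> nat) :
  {homo ns : i j / (i < j)%N >-> (i < j)%N} ->
  forall i k, (ns i + k <= ns (i + k))%N.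
Proof.
move=> hs i; elim=> [|k IH]; first by rewrite !addn0.
by have := hs (i + k)%N (i + k).+1 (ltnSn _); rewrite !addnS; lia.
Qed.

Lemma powRN_le {R : realType} (al x y : R) : 0 < al -> 1 <= x -> x <= y ->
  y `^ (- al) <= x `^ (- al).
Proof.
move=> al0 x1 xy.
rewrite !powRN lef_pV2 ?posrE ?powR_gt0 //; try lra.
by apply: ge0_ler_powR; rewrite ?nnegrE; lra.
Qed.

Lemma powRN_le1 {R : realType} (al x : R) : 0 < al -> 1 <= x -> x `^ (- al) <= 1.
Proof. by move=> al0 x1; have := powRN_le al0 (lexx 1) x1; rewrite powR1. Qed.

Lemma powRN_expr_le_inv_sqr {R : realType} (al : R) (q : nat) (x : R) :
  0 < al -> 2 <= q%:R * al -> 1 <= x -> (x ^+ q) `^ (- al) <= (x ^+ 2)^-1.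
Proof.
move=> al0 qa x1; have x0 : 0 <= x by lra.
rewrite -powR_mulrn // -powRrM -powR_invn //.
by apply: ler_powR => //; lra.
Qed.

Lemma double_sum_bound_div_le {R : realType} (c00 C y w z : R) :
  0 <= c00 -> 0 < C -> 1 <= y -> 1 <= w -> 0 <= z -> z * w <= 1 ->
  (y * w * c00 + C * (y * w * (2 * y + 1)) + C * ((y * w) ^+ 2 * z)) / (y * w) ^+ 2
    <= (c00 + 4 * C) / w.
Proof.
move=> c0 C0 y1 w1 z0 zw.
have yw : 0 < y * w by apply: mulr_gt0; lra.
rewrite ler_pdivrMr; last exact: exprn_gt0.
have w0 : w != 0 by apply/eqP; lra.
rewrite (_ : (c00 + 4 * C) / w * (y * w) ^+ 2 = (c00 + 4 * C) * (y ^+ 2 * w)); last by field.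
have h1 : y * w * c00 <= y ^+ 2 * w * c00.
  by rewrite ler_wpM2r // ler_wpM2r ?expr2 ?ler_peMl //; lra.
have h2 : C * (y * w * (2 * y + 1)) <= 3 * C * (y ^+ 2 * w).
  rewrite (_ : 3 * C * (y ^+ 2 * w) = C * (y * w * (3 * y))); last by ring.
  by rewrite !ler_wpM2l //; lra.
have h3 : C * ((y * w) ^+ 2 * z) <= C * (y ^+ 2 * w).
  rewrite (_ : (y * w) ^+ 2 * z = (y ^+ 2 * w) * (z * w)); last by ring.
  rewrite ler_wpM2l ?(ltW C0) // -[leRHS]mulr1 ler_wpM2l //.
  by rewrite mulr_ge0 ?exprn_ge0 //; lra.
have : 0 <= C * (y ^+ 2 * w) by rewrite mulr_ge0 ?mulr_ge0 ?exprn_ge0 //; lra.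
lra.
Qed.

Section DoubleSum.
Context {R : realType}.
Variables (c : nat -> nat -> R) (C al : R) (ns : nat -> nat).
Hypothesis cC : forall p q, c p q = c q p.
Hypothesis cS : forall p m, c p (m + p)%N = c 0 m.
Hypothesis cB : forall n, (1 <= n)%N -> `|c 0 n| <= C * n%:R `^ (- al).
Hypotheses (C0 : 0 < C) (al0 : 0 < al).
Hypothesis hs : {homo ns : i j / (i < j)%N >-> (i < j)%N}.

Lemma corr_term_le (M i j : nat) : (1 <= M)%N ->
  c (ns i) (ns j) <= (i == j)%:R * c 0 0 +
     C * ((((i - j) + (j - i) <= M)%N)%:R + M%:R `^ (- al)).
Proof.
move=> M1.
have hM : 0 <= M%:R `^ (- al) :> R by exact: powR_ge0.
have off_diag i' j' : (i' < j')%N -> c (ns i') (ns j') <=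
    C * ((((i' - j') + (j' - i') <= M)%N)%:R + M%:R `^ (- al)).
  move=> lij.
  have gap : (ns i' + (j' - i') <= ns j')%N.
    by have := homo_ltn_gap hs i' (j' - i'); rewrite subnKC // ltnW.
  have -> : ns j' = ((ns j' - ns i') + ns i')%N by lia.
  rewrite cS; set m := (ns j' - ns i')%N.
  have m1 : (1 <= m)%N by rewrite /m; lia.
  apply: le_trans (ler_norm _) _; apply: le_trans (cB m1) _.
  apply: ler_wpM2l; first exact: ltW.
  case: (leqP (i' - j' + (j' - i')) M) => h /=.
    by rewrite mulr1n -[X in X <= _]addr0 lerD // powRN_le1 // ler1n.
  rewrite add0r; apply: powRN_le => //; first by rewrite ler1n.
  by rewrite ler_nat /m; lia.
case: (ltngtP i j) => h.
- by rewrite mul0r add0r off_diag.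
- by rewrite mul0r add0r cC addnC off_diag.
- subst j; have -> : c (ns i) (ns i) = c 0 0 by rewrite -(cS (ns i) 0).
  rewrite mul1r lerDl; apply: mulr_ge0; first exact: ltW.
  exact: addr_ge0.
Qed.

Lemma double_sum_le (M N : nat) : (1 <= M)%N ->
  \sum_(i < N) \sum_(j < N) c (ns i) (ns j) <=
  N%:R * c 0 0 + C * (N * M.*2.+1)%N%:R + C * (N%:R ^+ 2 * M%:R `^ (- al)).
Proof.
move=> M1.
apply: le_trans (_ : \sum_(i < N) \sum_(j < N) ((i == j)%:R * c 0 0 +
     C * ((((i - j) + (j - i) <= M)%N)%:R + M%:R `^ (- al))) <= _).
  by apply: ler_sum => i _; apply: ler_sum => j _; exact: corr_term_le.
have row_sum (i : 'I_N) : \sum_(j < N) ((i == j)%:R * c 0 0 +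
     C * ((((i - j) + (j - i) <= M)%N)%:R + M%:R `^ (- al))) =
   c 0 0 + C * ((\sum_(j < N) ((i - j) + (j - i) <= M)%N)%:R + N%:R * M%:R `^ (- al)).
  rewrite big_split /=; congr (_ + _).
    rewrite (bigD1 i) //= eqxx mul1r big1 ?addr0 // => j /negbTE.
    by rewrite eq_sym => ->; rewrite mul0r.
  rewrite -mulr_sumr big_split /= natr_sum; congr (_ * (_ + _)).
  by rewrite sumr_const card_ord mulr_natl.
rewrite -addrA (eq_bigr _ (fun i _ => row_sum i)) big_split /= sumr_const card_ord mulr_natl.
rewrite -[c 0 0 *+ N]mulr_natl lerD2l -mulr_sumr -mulrDr ler_wpM2l //; first exact: ltW.
rewrite big_split /= lerD //.
  rewrite -natr_sum ler_nat (@leq_trans (\sum_(i < N) M.*2.+1)) //.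
    by apply: leq_sum => i _; exact: count_near_le.
  by rewrite sum_nat_const card_ord.
by rewrite sumr_const card_ord -mulrnA -natrX mulr_natl expnS expn1.
Qed.

Lemma double_sum_pow_le (q k : nat) : 2 <= q%:R * al -> 0 <= c 0 0 ->
  (\sum_(i < k.+1 ^ (q + 2)) \sum_(j < k.+1 ^ (q + 2)) c (ns i) (ns j)) /
    (k.+1 ^ (q + 2))%:R ^+ 2 <= (c 0 0 + 4 * C) / k.+1%:R ^+ 2.
Proof.
move=> hq c00.
have M1 : (1 <= k.+1 ^ q)%N by rewrite expn_gt0.
apply: le_trans (ler_wpM2r _ (double_sum_le _ M1)) _; first by rewrite invr_ge0 exprn_ge0.
set x : R := k.+1%:R; have x1 : 1 <= x by rewrite /x ler1n.
set y : R := (k.+1 ^ q)%:R; set w : R := x ^+ 2.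
have ey : y = x ^+ q by rewrite /y natrX.
have eN : (k.+1 ^ (q + 2))%:R = y * w by rewrite natrX exprD ey.
have e2 : ((k.+1 ^ (q + 2) * (k.+1 ^ q).*2.+1)%N)%:R = y * w * (2 * y + 1).
  by rewrite natrM eN -addn1 natrD -muln2 natrM -/y (mulrC y 2%:R).
rewrite e2 eN.
have w0 : 0 < w by rewrite /w; apply: exprn_gt0; lra.
(* with [M = (k+1)^q] the band term [C N (2M+1)] and the tail [C N^2 M^-al]
   are both O(N^2 / (k+1)^2) *)
have zw : y `^ (- al) * w <= 1.
  rewrite -(mulVf (lt0r_neq0 w0)) ler_wpM2r ?(ltW w0) // ey.
  exact: powRN_expr_le_inv_sqr.
apply: double_sum_bound_div_le => //; last exact: powR_ge0.
- by rewrite ey exprn_ege1.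
- by rewrite /w exprn_ege1.
Qed.

End DoubleSum.

Lemma sum_inv_sqr_le {R : realType} n :
  \sum_(k < n) (k.+1%:R ^+ 2 : R)^-1 <= 2 - 2 / n.+1%:R.
Proof.
elim: n => [|n IH]; first by rewrite big_ord0 divr1 subrr.
rewrite big_ord_recr /=; apply: le_trans (lerD IH (lexx _)) _.
set x : R := n.+1%:R; have x1 : 1 <= x by rewrite /x ler1n.
have -> : n.+2%:R = x + 1 by rewrite /x -addn1 natrD.
clearbody x; rewrite -addrA lerD2l.
have x0 : x != 0 by apply/eqP; lra.
have x10 : x + 1 != 0 by apply/eqP; lra.
suff : (x ^+ 2)^-1 <= 2 / x - 2 / (x + 1) by lra.
rewrite (_ : 2 / x - 2 / (x + 1) = ((x * (x + 1)) / 2)^-1); last by field; rewrite ?x0 ?x10.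
have xp : 0 < x by lra.
rewrite lef_pV2 ?posrE; first nra.
- exact: exprn_gt0.
- by apply: divr_gt0; [apply: mulr_gt0|]; lra.
Qed.

Lemma nneseries_inv_sqr_lty {R : realType} (D : R) : 0 <= D ->
  (\sum_(k <oo) (D / k.+1%:R ^+ 2)%:E < +oo)%E.
Proof.
move=> D0; apply: (@le_lt_trans _ _ (2 * D)%:E); last exact: ltry.
apply: lime_le.
  by apply: is_cvg_nneseries => n _ _; rewrite lee_fin divr_ge0 // exprn_ge0.
apply: nearW => n; rewrite sumEFin lee_fin big_mkord -mulr_sumr mulrC ler_wpM2r //.
by apply: le_trans (sum_inv_sqr_le n) _; rewrite gerBl divr_ge0.
Qed.

(* By monotone convergence [x |-> \sum_k t k x] is integrable, hence finite a.e. *)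
Lemma ae_cvg0_of_summable_integral {d : measure_display} {X : measurableType d} {R : realType}
    (mu : {measure set X -> \bar R}) (t : nat -> X -> R) :
  (forall k x, 0 <= t k x) -> (forall k, measurable_fun setT (t k)) ->
  (\sum_(k <oo) \int[mu]_x (t k x)%:E < +oo)%E ->
  {ae mu, forall x, t ^~ x @ \oo --> 0}.
Proof.
move=> t0 mt sumt.
pose F x := (\sum_(k <oo) (t k x)%:E)%E.
have F0 x : (0 <= F x)%E by apply: nneseries_ge0 => k _ _; rewrite lee_fin.
have mEt k : measurable_fun setT (fun x => (t k x)%:E) by exact/measurable_EFinP.
have mF : measurable_fun setT F.
  by apply: ge0_emeasurable_sum => // k x _ _; rewrite lee_fin.
have iF : mu.-integrable setT F.
  apply/integrableP; split => //.
  under eq_integral do rewrite gee0_abs //.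
  by rewrite integral_nneseries // => k x _; rewrite lee_fin.
apply: filterS (integrable_ae measurableT iF) => x /(_ I) Ffin.
apply: cvg_series_cvg_0; apply: nnseries_is_cvg => //.
by rewrite ltey_eq Ffin.
Qed.

Section OrbitSumDecay.
Context {d : measure_display} {X : measurableType d} {R : realType}.
Context {P : probability X R} {T : X -> X} {a b : X -> R} {ns : nat -> nat} {C al : R}.
Hypothesis mpT : measure_preserving P T.
Hypotheses (ma : measurable_fun setT a) (mb : measurable_fun setT b).
Hypothesis ia : P.-integrable setT (fun x => (a x ^+ 2)%:E).
Hypothesis ib : P.-integrable setT (fun x => (b x ^+ 2)%:E).
Hypothesis decay : forall n, (1 <= n)%N -> `|corr P T a b 0 n| <= C * n%:R `^ (- al).
Hypotheses (C0 : 0 < C) (al0 : 0 < al).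
Hypothesis hs : {homo ns : i j / (i < j)%N >-> (i < j)%N}.

Lemma measurable_orbit_sum_norm2 N : measurable_fun setT (orbit_sum_norm2 T ns a b N).
Proof.
have msum (g : X -> R) : measurable_fun setT g ->
    measurable_fun setT (fun x => \sum_(i < N) g (iter (ns i) T x)).
  move=> mg; apply: (@measurable_sum _ _ _ setT _ (index_enum 'I_N)
    (fun i x => g (iter (ns i) T x))) => i.
  exact: measurableT_comp mg (measurable_iter mpT (ns i)).
by apply: measurable_funD; apply: measurable_funX; apply: msum.
Qed.

Lemma integral_normalized_orbit_sum_le q k : 2 <= q%:R * al ->
  (\int[P]_x (orbit_sum_norm2 T ns a b (k.+1 ^ (q + 2)) x / (k.+1 ^ (q + 2))%:R ^+ 2)%:E
   <= ((corr P T a b 0 0 + 4 * C) / k.+1%:R ^+ 2)%:E)%E.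
Proof.
move=> hq; set N := (k.+1 ^ (q + 2))%N.
have mG : measurable_fun setT (fun x => (orbit_sum_norm2 T ns a b N x)%:E).
  exact/measurable_EFinP/measurable_orbit_sum_norm2.
under eq_integral do rewrite mulrC EFinM.
rewrite (ge0_integralZl P measurableT mG) ?lee_fin ?invr_ge0 ?exprn_ge0 //; last first.
  by move=> x _; rewrite lee_fin addr_ge0 ?sqr_ge0.
rewrite integral_orbit_sum_norm2 // -EFinM lee_fin mulrC.
apply: (double_sum_pow_le (al := al)) => //.
- exact: corrC.
- by move=> p m; apply: corr_shift.
- exact: corr00_ge0.
Qed.

Lemma ae_cvg0_normalized_orbit_sum q : 2 <= q%:R * al ->
  {ae P, forall x, (fun k => orbit_sum_norm2 T ns a b (k.+1 ^ (q + 2)) x /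
    (k.+1 ^ (q + 2))%:R ^+ 2) @ \oo --> 0}.
Proof.
move=> hq; apply: ae_cvg0_of_summable_integral.
- by move=> k x; rewrite divr_ge0 ?exprn_ge0 // /orbit_sum_norm2 addr_ge0 ?sqr_ge0.
- by move=> k; apply: measurable_funM => //; exact: measurable_orbit_sum_norm2.
have D0 : 0 <= corr P T a b 0 0 + 4 * C by rewrite addr_ge0 ?corr00_ge0 // mulr_ge0 // ltW.
apply: le_lt_trans (nneseries_inv_sqr_lty D0).
apply: lee_nneseries => [k _ _|k _]; last exact: integral_normalized_orbit_sum_le.
apply: integral_ge0 => x _.
by rewrite lee_fin divr_ge0 ?exprn_ge0 // /orbit_sum_norm2 addr_ge0 ?sqr_ge0.
Qed.

End OrbitSumDecay.

Lemma normr_le_cmod {R : realType} (re im : R) : `|re| <= cmod re im.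
Proof.
rewrite /cmod -sqrtr_sqr ler_sqrt ?addr_ge0 ?sqr_ge0 //.
by rewrite lerDl sqr_ge0.
Qed.

Section LacunaryAverages.
Context {R : realType}.
Variables (u : nat -> R) (B : R) (Nk : nat -> nat).
Hypothesis uB : forall i, `|u i| <= B.
Hypothesis Nk_incr : forall k, (Nk k < Nk k.+1)%N.

Let S N := \sum_(i < N) u i.

Lemma partial_sum_diff_le M m : `|S (M + m)%N - S M| <= m%:R * B.
Proof.
elim: m => [|m IH]; first by rewrite addn0 subrr normr0 mul0r.
rewrite addnS /S big_ord_recr /= -/(S _).
rewrite (_ : S (M + m)%N + u (M + m)%N - S M = (S (M + m)%N - S M) + u (M + m)%N);
  last by rewrite addrAC.
apply: le_trans (ler_normD _ _) _.
by rewrite -nat1r mulrDl mul1r addrC lerD.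
Qed.

Lemma exists_bracketing_index K N : (Nk K <= N)%N ->
  exists2 k, (K <= k)%N & (Nk k <= N < Nk k.+1)%N.
Proof.
move=> h; rewrite -(subnKC h); move: (N - Nk K)%N => m {h N}.
elim: m => [|m [k Kk /andP[h1 h2]]].
  by exists K => //; rewrite addn0 leqnn Nk_incr.
case: (ltnP (Nk K + m.+1) (Nk k.+1)) => h3.
  by exists k => //; apply/andP; split => //; lia.
by exists k.+1; [lia | have := Nk_incr k.+1; lia].
Qed.

(* between two consecutive [Nk k] the partial sum moves by at most [(Nk k.+1 - Nk k) B] *)
Lemma small_partial_sums_of_subseq :
  (forall e : R, 0 < e -> exists K, forall k, (K <= k)%N ->
     (Nk k.+1 - Nk k)%:R <= e * (Nk k)%:R) ->
  (forall e : R, 0 < e -> exists K, forall k, (K <= k)%N -> `|S (Nk k)| <= e * (Nk k)%:R) ->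
  forall e : R, 0 < e -> exists N0, forall N, (N0 <= N)%N -> `|S N| <= e * N%:R.
Proof.
move=> gap_small sub_small e e0.
have B0 : 0 <= B := le_trans (normr_ge0 (u 0)) (uB 0).
have [K1 HK1] := sub_small (e / 2) ltac:(lra).
have [K2 HK2] := gap_small (e / (2 * (B + 1))) ltac:(apply: divr_gt0; lra).
exists (Nk (maxn K1 K2)) => N hN.
have [k Kk /andP[h1 h2]] := exists_bracketing_index hN.
have hd := partial_sum_diff_le (Nk k) (N - Nk k); rewrite subnKC // in hd.
have hS := HK1 k (leq_trans (leq_maxl _ _) Kk).
have hr := HK2 k (leq_trans (leq_maxr _ _) Kk).
have dle : (N - Nk k)%:R <= (Nk k.+1 - Nk k)%:R :> R by rewrite ler_nat; lia.
have nN : (Nk k)%:R <= N%:R :> R by rewrite ler_nat.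
set n := (Nk k)%:R in hS hr nN; set r := (Nk k.+1 - Nk k)%:R in hr dle.
set m := (N - Nk k)%:R in hd dle.
have n0 : 0 <= n by rewrite /n ler0n.
have rB : r * (B + 1) <= e / 2 * n.
  apply: le_trans (ler_wpM2r _ hr) _; first lra.
  have hB : B + 1 != 0 by apply/eqP; lra.
  by rewrite (_ : e / (2 * (B + 1)) * n * (B + 1) = e / 2 * n) //; field.
have mB : m * B <= r * (B + 1).
  apply: le_trans (ler_wpM2r B0 dle) _; apply: ler_wpM2l; first by rewrite /r ler0n.
  lra.
have : `|S N| <= `|S (Nk k)| + m * B.
  have := ler_normD (S N - S (Nk k)) (S (Nk k)).
  by rewrite subrK => /le_trans; apply; lra.
have : e * n <= e * N%:R by apply: ler_wpM2l; lra.
lra.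
Qed.

End LacunaryAverages.

Lemma pow_succ_sub_small {R : realType} (p : nat) : (0 < p)%N ->
  forall e : R, 0 < e -> exists K, forall k, (K <= k)%N ->
  ((k.+2 ^ p - k.+1 ^ p)%N)%:R <= e * (k.+1 ^ p)%N%:R.
Proof.
move=> p0 e e0.
have h1 : (fun k => 1 + harmonic k : R) @ \oo --> (1 : R).
  rewrite -[X in _ --> X]addr0; apply: cvgD; [exact: cvg_cst|exact: cvg_harmonic].
have h2 : (fun k => (1 + harmonic k : R) ^+ p) @ \oo --> (1 : R).
  have hc : {for (1:R), continuous (fun x : R => x ^+ p)} by exact: exprn_continuous.
  by have := continuous_cvg _ hc h1; rewrite expr1n; apply.
have /cvgrPdistC_lt/(_ e e0) [K _ HK] := h2.
exists K => k Kk; have := HK k Kk => /=.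
set y : R := k.+1%:R; have y1 : 1 <= y by rewrite /y ler1n.
have y0 : y != 0 by apply/eqP; lra.
have -> : 1 + k.+1%:R^-1 = (y + 1) / y by rewrite /y; field.
rewrite natrB ?leq_exp2r // !natrX -/y (_ : k.+2%:R = y + 1); last by rewrite /y -addn1 natrD.
rewrite expr_div_n => h.
have yp : 0 < y ^+ p by apply: exprn_gt0; lra.
have h4 : (y + 1) ^+ p / y ^+ p - 1 <= e by have := ler_norm ((y + 1) ^+ p / y ^+ p - 1); lra.
have := ler_wpM2r (ltW yp) h4; clearbody y.
have yp0 : y ^+ p != 0 by rewrite expf_neq0.
by rewrite (_ : ((y + 1) ^+ p / y ^+ p - 1) * y ^+ p = (y + 1) ^+ p - y ^+ p) //; field.
Qed.

Lemma small_of_sqr_le_cvg0 {R : realType} (s n t : nat -> R) : (forall k, 0 < n k) ->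
  (forall k, s k ^+ 2 / n k ^+ 2 <= t k) -> t @ \oo --> 0 ->
  forall e, 0 < e -> exists K, forall k, (K <= k)%N -> `|s k| <= e * n k.
Proof.
move=> n0 st t0 e e0.
have /cvgrPdist_lt/(_ _ (exprn_gt0 2 e0)) [K _ HK] := t0.
exists K => k Kk; have := HK k Kk; rewrite sub0r normrN => htk.
have nk := n0 k.
have : s k ^+ 2 < (e * n k) ^+ 2.
  rewrite exprMn -ltr_pdivrMr ?exprn_gt0 //.
  exact: le_lt_trans (st k) (le_lt_trans (ler_norm _) htk).
by rewrite -(real_normK (num_real (s k))) ltr_pXn2r ?nnegrE ?mulr_ge0 //; lra.
Qed.

Lemma cvg_avg_of_small_sums {R : realType} (g : nat -> R) (c : R) :
  (forall e : R, 0 < e -> exists N0, forall N, (N0 <= N)%N ->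
     `|\sum_(i < N) (g i - c)| <= e * N%:R) ->
  (fun N : nat => N%:R^-1 * \sum_(i < N) g i) @ \oo --> c.
Proof.
move=> H; apply/cvgrPdist_lt => e e0.
have [N0 HN] := H (e / 2) ltac:(lra).
exists (maxn N0 1) => // N hN /=.
have Np : 0 < N%:R :> R by rewrite ltr0n (leq_trans _ hN) ?leq_maxr.
have := HN N (leq_trans (leq_maxl _ _) hN).
rewrite big_split /= sumr_const card_ord -[- c *+ N]mulr_natr => h.
have -> : c - N%:R^-1 * \sum_(i < N) g i = - (N%:R^-1 * (\sum_(i < N) g i + - c * N%:R)).
  by field; apply/eqP; lra.
rewrite normrN normrM ger0_norm ?invr_ge0 ?(ltW Np) // ltr_pdivrMl //.
by apply: le_lt_trans h _; nra.
Qed.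

Lemma cvg_avg_of_pow_subseq {R : realType} (g : nat -> R) (c B : R) (p : nat)
    (t : nat -> R) :
  (0 < p)%N -> (forall i, `|g i - c| <= B) -> t @ \oo --> 0 ->
  (forall k, (\sum_(i < k.+1 ^ p) (g i - c)) ^+ 2 / (k.+1 ^ p)%:R ^+ 2 <= t k) ->
  (fun N => N%:R^-1 * \sum_(i < N) g i) @ \oo --> c.
Proof.
move=> p0 gB t0 tB; apply: cvg_avg_of_small_sums.
apply: (small_partial_sums_of_subseq (Nk := fun k => k.+1 ^ p)%N gB).
- by move=> k; rewrite ltn_exp2r.
- exact: pow_succ_sub_small.
- by apply: small_of_sqr_le_cvg0 tB t0 => k; rewrite ltr0n expn_gt0.
Qed.

Theorem mainTheorem5 (d : measure_display) (X : measurableType d) (R : realType)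
  (P : probability X R) (T : X -> X) (fr fi : X -> R) (ns : nat -> nat)
  (alpha C : R) :
  measure_preserving P T ->
  measurable_fun setT fr -> measurable_fun setT fi ->
  square_integrable P fr -> square_integrable P fi ->
  ess_bounded P fr -> ess_bounded P fi ->
  {homo ns : i j / (i < j)%N >-> (i < j)%N} ->
  0 < alpha -> 0 < C ->
  (let f0r := fun x => fr x - mean P fr in
   let f0i := fun x => fi x - mean P fi in
   forall n : nat, (1 <= n)%N ->
     cmod (inner_re P (f0r \o iter n T) (f0i \o iter n T) f0r f0i)
          (inner_im P (f0r \o iter n T) (f0i \o iter n T) f0r f0i)
     <= C * (n%:R `^ (- alpha))) ->
  {ae P, forall x,
     (avg_along T ns fr x @ \oo --> mean P fr) /\
     (avg_along T ns fi x @ \oo --> mean P fi)}.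
Proof.
move=> mpT mfr mfi sqr sqi [Mr Hr] [Mi Hi] hs al0 C0 Hcor.
pose a x := fr x - mean P fr; pose b x := fi x - mean P fi.
have ma : measurable_fun setT a by exact: measurable_funB.
have mb : measurable_fun setT b by exact: measurable_funB.
have decay n : (1 <= n)%N -> `|corr P T a b 0 n| <= C * n%:R `^ (- alpha).
  by move=> n1; rewrite corrC; apply: le_trans (Hcor n n1); exact: normr_le_cmod.
have [q hq] : exists q : nat, 2 <= q%:R * alpha.
  exists (Num.bound (2 / alpha)); rewrite -ler_pdivrMr //.
  by apply/ltW/archi_boundP; rewrite divr_ge0 // ltW.
have := ae_cvg0_normalized_orbit_sum mpT ma mb (integrable_sqrB _ mfr sqr)
  (integrable_sqrB _ mfi sqi) decay C0 al0 hs hq.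
apply: filterS3 (ae_forall_iter mpT Hr) (ae_forall_iter mpT Hi) => x hr hi t0.
have p0 : (0 < q + 2)%N by rewrite addn2.
split; rewrite /avg_along.
- apply: (cvg_avg_of_pow_subseq (g := fun i => fr (iter (ns i) T x))
    (B := Mr + `|mean P fr|) p0 _ t0) => [i|k].
    by apply: le_trans (ler_normB _ _) _; rewrite lerD2r hr.
  by rewrite ler_wpM2r ?invr_ge0 ?exprn_ge0 // lerDl sqr_ge0.
- apply: (cvg_avg_of_pow_subseq (g := fun i => fi (iter (ns i) T x))
    (B := Mi + `|mean P fi|) p0 _ t0) => [i|k].
    by apply: le_trans (ler_normB _ _) _; rewrite lerD2r hi.
  by rewrite ler_wpM2r ?invr_ge0 ?exprn_ge0 // lerDr sqr_ge0.
Qed.
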